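(* Let $D\ge 2$ and $\eta=\mathrm{diag}(-1,1,\dots,1)$. Let $g_{\mu\nu}$ and $f_{\mu\nu}$ be two real symmetric invertible $D\times D$ matrices of Lorentzian signature $(-,+,\dots,+)$ (the two metrics at a point). Let $L^A{}_\mu$ be any real matrix with $\eta_{AB}L^A{}_\mu L^B{}_\nu=f_{\mu\nu}$, and let $e_A{}^\mu$ be any real matrix with $\eta^{AB}e_A{}^\mu e_B{}^\nu=g^{\mu\nu}$ (where $g^{\mu\nu}$ is the inverse of $g_{\mu\nu}$). Define the matrix $M$ with components $M^{AB}=e^{A\mu}L^B{}_\mu$, where $e^{A\mu}=\eta^{AC}e_C{}^\mu$. Then $g^{-1}f$ has a real square root $\gamma$ of the form $\gamma=f^{-1}s$ with $s$ a real symmetric matrix if and only if the real matrix $\eta M^t\eta M$ has a real square root which can be written as the product of $\eta$ with a real symmetric matrix.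
   Context: Greek indices are space-time indices and capital Latin indices are Lorentz indices, moved with $\eta_{AB}$; repeated indices are summed. $m^t$ denotes transpose; a square root of $A$ is a matrix $\gamma$ with $\gamma^2=A$. The matrix $M$ is invertible. *)

From HB Require Import structures.
From mathcomp Require Import all_boot all_order all_algebra.
From mathcomp Require Import reals.
Set Implicit Arguments. Unset Strict Implicit. Unset Printing Implicit Defensive.
Import Order.TTheory GRing.Theory Num.Theory.
Local Open Scope ring_scope.

(* Minkowski metric eta = diag(-1,1,...,1) of size D (index 0 is the time index). *)
Definition eta_mx (R : realType) (D : nat) : 'M[R]_D :=
  \matrix_(i < D, j < D) (if i == j then (if nat_of_ord i == 0%N then -1 else 1) else 0).

Definition sym_mx (R : realType) (D : nat) (A : 'M[R]_D) : Prop := A^T = A.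

(* Lorentzian signature (-,+,...,+): by Sylvester's law, the symmetric matrix g
   is congruent to eta, i.e. P^T g P = eta for some invertible real P. *)
Definition lorentzian (R : realType) (D : nat) (g : 'M[R]_D) : Prop :=
  sym_mx g /\ exists P : 'M[R]_D, P \in unitmx /\ P^T *m g *m P = eta_mx R D.

Definition is_sqrt_mx (R : realType) (D : nat) (gam A : 'M[R]_D) : Prop :=
  gam *m gam = A.

(* The proof is a change of frame.  Since L^T eta L = f, the matrix L is
   invertible, and with P := eta L one finds
     eta M^T eta M = eta L g^-1 L^T = P (g^-1 f) P^-1,
   so gamma |-> P gamma P^-1 is a bijection between square roots of g^-1 f and
   square roots of eta M^T eta M.  The form conditions match as well:
   gamma = f^-1 s with s symmetric means that f gamma is symmetric,
   rho = eta S with S symmetric means that eta rho is symmetric, and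
   eta (P gamma P^-1) is congruent to f gamma. *)
From mathcomp Require Import all_boot all_algebra.
From mathcomp Require Import reals.
Set Implicit Arguments. Unset Strict Implicit. Unset Printing Implicit Defensive.
Import GRing.Theory.
Local Open Scope ring_scope.

Section SymmetricFactors.

Variables (R : comUnitRingType) (n : nat).
Implicit Types A B Bi C P X : 'M[R]_n.

Lemma tr_congr_sym C A : A^T = A -> (C *m A *m C^T)^T = C *m A *m C^T.
Proof. by move=> symA; rewrite !trmx_mul trmxK symA mulmxA. Qed.

Lemma sym_congrP C A :
  C \in unitmx -> (C *m A *m C^T)^T = C *m A *m C^T <-> A^T = A.
Proof.
move=> Cu; split; last exact: tr_congr_sym.
move=> /(tr_congr_sym (invmx C)).
by rewrite trmx_inv !mulmxA mulVmx // mul1mx mulmxK // unitmx_tr.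
Qed.

Lemma sym_factorP Bi B X :
  Bi *m B = 1%:M -> (exists s, s^T = s /\ X = Bi *m s) <-> (B *m X)^T = B *m X.
Proof.
move=> BiB; have BBi := mulmx1C BiB; split.
  by move=> [s [symS ->]]; rewrite mulmxA BBi mul1mx.
by move=> symBX; exists (B *m X); rewrite mulmxA BiB mul1mx.
Qed.

Lemma sqrt_conjP P Pi A (Q1 Q2 : 'M[R]_n -> Prop) :
    Pi *m P = 1%:M -> (forall gam, Q2 (P *m gam *m Pi) <-> Q1 gam) ->
  (exists gam, gam *m gam = A /\ Q1 gam) <->
  (exists rho, rho *m rho = P *m A *m Pi /\ Q2 rho).
Proof.
move=> PiP Q12; have PPi := mulmx1C PiP.
have conj_mul gam : (P *m gam *m Pi) *m (P *m gam *m Pi) = P *m (gam *m gam) *m Pi.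
  by rewrite !mulmxA -(mulmxA _ Pi) PiP mulmx1.
split=> [[gam [sq_gam /Q12 Q2gam]] | [rho [sq_rho Q2rho]]].
  by exists (P *m gam *m Pi); rewrite conj_mul sq_gam.
have rhoE : rho = P *m (Pi *m rho *m P) *m Pi.
  by rewrite !mulmxA PPi mul1mx -mulmxA PPi mulmx1.
exists (Pi *m rho *m P); rewrite -Q12 -rhoE; split=> //.
have -> : A = Pi *m (P *m A *m Pi) *m P.
  by rewrite !mulmxA PiP mul1mx -mulmxA PiP mulmx1.
by rewrite -sq_rho !mulmxA -(mulmxA _ P Pi) PPi mulmx1.
Qed.

End SymmetricFactors.

Section Eta.

Variables (R : realType) (D : nat).
Local Notation eta := (eta_mx R D).

Lemma eta_mx_diag :
  eta = diag_mx (\row_(i < D) (if nat_of_ord i == 0%N then -1 else 1 : R)).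
Proof. by apply/matrixP=> i j; rewrite !mxE eq_sym; case: eqP => // ->. Qed.

Lemma tr_eta_mx : eta^T = eta.
Proof. by rewrite eta_mx_diag tr_diag_mx. Qed.

Lemma eta_mx_invol : eta *m eta = 1%:M.
Proof.
rewrite eta_mx_diag mulmx_diag; apply/matrixP=> i j; rewrite !mxE.
by case: (_ == _); rewrite ?mulrNN mulr1 // eq_sym.
Qed.

Lemma eta_mx_unit : eta \in unitmx.
Proof. by case: (mulmx1_unit eta_mx_invol). Qed.

End Eta.

Section Vielbeins.

Variables (R : realType) (D : nat) (g f L e : 'M[R]_D).
Hypotheses (f_unit : f \in unitmx)
  (hL : L^T *m eta_mx R D *m L = f) (he : e^T *m eta_mx R D *m e = invmx g).
Local Notation eta := (eta_mx R D).

Lemma vielbein_unit : L \in unitmx.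
Proof. by move: f_unit; rewrite -hL !unitmx_mul => /andP[_]. Qed.

Lemma vielbein_frameV : (invmx L *m eta) *m (eta *m L) = 1%:M.
Proof.
by rewrite mulmxA -(mulmxA _ eta eta) eta_mx_invol mulmx1 mulVmx ?vielbein_unit.
Qed.

Lemma eta_gram_similar :
  let M := eta *m e *m L^T in
  eta *m M^T *m eta *m M = (eta *m L) *m (invmx g *m f) *m (invmx L *m eta).
Proof.
move=> M; rewrite /M !trmx_mul tr_eta_mx trmxK -hL -he !mulmxA (mulmxK vielbein_unit).
by rewrite -!(mulmxA _ eta eta) !eta_mx_invol !mulmx1.
Qed.

Lemma eta_conj_congruent gam :
  eta *m ((eta *m L) *m gam *m (invmx L *m eta))
  = (invmx L *m eta)^T *m (f *m gam) *m (invmx L *m eta).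
Proof.
have LTu : L^T \in unitmx by rewrite unitmx_tr vielbein_unit.
by rewrite trmx_mul tr_eta_mx trmx_inv -hL !mulmxA (mulmxKV LTu).
Qed.

End Vielbeins.

Theorem proposition2 (R : realType) (D : nat) (hD : (2 <= D)%N)
    (g f L e : 'M[R]_D)
    (hgsym : sym_mx g) (hfsym : sym_mx f)
    (hginv : g \in unitmx) (hfinv : f \in unitmx)
    (hglor : lorentzian g) (hflor : lorentzian f)
    (hL : L^T *m eta_mx R D *m L = f)
    (he : e^T *m eta_mx R D *m e = invmx g) :
  let M := eta_mx R D *m e *m L^T in
  (exists gam : 'M[R]_D, is_sqrt_mx gam (invmx g *m f) /\
     exists s : 'M[R]_D, sym_mx s /\ gam = invmx f *m s)
  <->
  (exists rho : 'M[R]_D,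
     is_sqrt_mx rho (eta_mx R D *m M^T *m eta_mx R D *m M) /\
     exists S : 'M[R]_D, sym_mx S /\ rho = eta_mx R D *m S).
Proof.
move=> M; rewrite /is_sqrt_mx (eta_gram_similar hfinv hL he).
apply: (sqrt_conjP _ (vielbein_frameV hfinv hL)) => gam.
rewrite (sym_factorP _ (eta_mx_invol R D)) (sym_factorP _ (mulVmx hfinv)).
rewrite (eta_conj_congruent hfinv hL) -[X in _ *m X]trmxK sym_congrP //.
by rewrite unitmx_tr unitmx_mul unitmx_inv (vielbein_unit hfinv hL) eta_mx_unit.
Qed.
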